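(* Let $G$ and $H$ be finite simple graphs with ${\rm diam}(G\diamond H)=2$. Then $$E((G\diamond H)_{SR})=TW(G\diamond H)\cup E(\overline{G}\,\Box\,\overline{H})\cup E(G\times\overline{H})\cup E(\overline{G}\times H),$$ where all these edge sets are viewed as sets of unordered pairs of elements of $V(G)\times V(H)$.
   Context: The modular product $G\diamond H$ has vertex set $V(G)\times V(H)$; distinct vertices $(g,h)$ and $(g',h')$ are adjacent iff ($g=g'$ and $hh'\in E(H)$), or ($gg'\in E(G)$ and $h=h'$), or ($gg'\in E(G)$ and $hh'\in E(H)$), or ($g\neq g'$, $h\neq h'$, $gg'\notin E(G)$ and $hh'\notin E(H)$). $\overline{X}$ is the complement of $X$. In the Cartesian product $A\Box B$, $(a,b)(a',b')$ is an edge iff ($a=a'$ and $bb'\in E(B)$) or ($aa'\in E(A)$ and $b=b'$); in the direct product $A\times B$ it is an edge iff $aa'\in E(A)$ and $bb'\in E(B)$. For a graph $X$, $TW(X)$ is the set of edges $uv$ of $X$ with $N_X[u]=N_X[v]$. Two distinct vertices $u,v$ of $X$ in the same component are mutually maximally distant if there is no $x\in N_X(u)$ with $d_X(x,v)=d_X(u,v)+1$ and no $y\in N_X(v)$ with $d_X(y,u)=d_X(u,v)+1$; the strong resolving graph $X_{SR}$ has as edges exactly the mutually maximally distant pairs. *)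

From mathcomp Require Import all_boot.
Set Implicit Arguments. Unset Strict Implicit. Unset Printing Implicit Defensive.

Definition simple_graph (T : finType) (e : rel T) : Prop :=
  symmetric e /\ irreflexive e.

Section Graphs.
Variables (T1 T2 : finType).

Definition compl_graph (T : finType) (e : rel T) : rel T :=
  fun x y => (x != y) && ~~ e x y.

Definition modular_prod (G : rel T1) (H : rel T2) : rel (T1 * T2) :=
  fun p q =>
    (p != q) &&
    [|| (p.1 == q.1) && H p.2 q.2,
        G p.1 q.1 && (p.2 == q.2),
        G p.1 q.1 && H p.2 q.2
      | [&& p.1 != q.1, p.2 != q.2, ~~ G p.1 q.1 & ~~ H p.2 q.2]].

Definition cart_prod (A : rel T1) (B : rel T2) : rel (T1 * T2) :=
  fun p q => ((p.1 == q.1) && B p.2 q.2) || (A p.1 q.1 && (p.2 == q.2)).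

Definition direct_prod (A : rel T1) (B : rel T2) : rel (T1 * T2) :=
  fun p q => A p.1 q.1 && B p.2 q.2.
End Graphs.

Section Distance.
Variables (T : finType) (X : rel T).

Fixpoint ball (k : nat) (u : T) : {set T} :=
  match k with
  | 0 => [set u]
  | k'.+1 => ball k' u :|: [set y | [exists x in ball k' u, X x y]]
  end.

(* graph distance (meaningful when u and v are in the same component:
   it is then the least k with v in ball k u, which is < #|T|) *)
Definition gdist (u v : T) : nat :=
  find (fun k => v \in ball k u) (iota 0 #|T|).

Definition gconnected : Prop := forall u v : T, connect X u v.

Definition diam : nat := \max_(p : T * T) gdist p.1 p.2.

Definition closed_nbhd (u : T) : {set T} := u |: [set x | X u x].

Definition twin_edge (u v : T) : bool :=
  X u v && (closed_nbhd u == closed_nbhd v).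

Definition mmd (u v : T) : bool :=
  [&& u != v, connect X u v,
      ~~ [exists x, X u x && (gdist x v == (gdist u v).+1)] &
      ~~ [exists y, X v y && (gdist y u == (gdist u v).+1)]].

Definition strong_resolving_graph : rel T := mmd.
End Distance.

From mathcomp Require Import all_boot.
Set Implicit Arguments. Unset Strict Implicit. Unset Printing Implicit Defensive.

(* In a connected graph of diameter at most 2, distinct non-adjacent vertices
   are at distance 2, the maximum, so they are always mutually maximally
   distant; adjacent vertices are mutually maximally distant exactly when
   neither has a neighbour outside the closed neighbourhood of the other,
   i.e. when they are true twins.  For the modular product, the distinct
   non-adjacent pairs are exactly the edges of the complement, which split
   into the three product edge sets of the statement. *)

Section DistanceFacts.
Variables (T : finType) (X : rel T).

Lemma gdist_le_diam u v : gdist X u v <= diam X.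
Proof. exact: (@leq_bigmax _ (fun p : T * T => gdist X p.1 p.2) (u, v)). Qed.

Lemma in_ball1 u v : (v \in ball X 1 u) = (v == u) || X u v.
Proof.
rewrite /= in_setU in_set1; congr (_ || _).
rewrite inE; apply/existsP/idP => [[x /andP [/set1P -> ->]] //|uv].
by exists u; rewrite set11 uv.
Qed.

Lemma gdist_refl u : gdist X u u = 0.
Proof.
rewrite /gdist.
have : 0 < #|T| by apply/card_gt0P; exists u.
by case: #|T| => //= n _; rewrite set11.
Qed.

Hypothesis diam_le2 : diam X <= 2.

Lemma gdist_le2 u v : gdist X u v <= 2.
Proof. exact: leq_trans (gdist_le_diam u v) diam_le2. Qed.

Lemma gdist_neq u v : u != v -> gdist X u v = if X u v then 1 else 2.
Proof.
move=> neq_uv.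
have := gdist_le2 u v.
have : #|[set u; v]| <= #|T| by exact: max_card.
rewrite cards2 neq_uv /gdist.
case: #|T| => [|[|n]] //= _.
rewrite in_ball1 /= in_set1 eq_sym (negbTE neq_uv) /=.
by case: (X u v) => //=; case: find.
Qed.

Lemma gdist_eq2 u v : (gdist X u v == 2) = (u != v) && ~~ X u v.
Proof.
case: (eqVneq u v) => [->|neq_uv]; first by rewrite gdist_refl.
by rewrite gdist_neq //; case: (X u v).
Qed.

Hypotheses (symX : symmetric X) (irrX : irreflexive X) (connX : gconnected X).

Lemma mmd_nonadj u v : ~~ X u v -> mmd X u v = (u != v).
Proof.
move=> nuv; rewrite /mmd connX /=.
case: (eqVneq u v) => [//|neq_uv] /=; rewrite gdist_neq // (negbTE nuv).
by apply/andP; split; apply/existsPn => x; apply/negP => /andP [_ /eqP d3];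
  have := gdist_le2 x u; have := gdist_le2 x v; rewrite d3.
Qed.

Lemma mmd_adj u v : X u v -> mmd X u v = (closed_nbhd X u == closed_nbhd X v).
Proof.
move=> uv; have neq_uv : u != v by apply: contraTneq uv => ->; rewrite irrX.
rewrite /mmd connX neq_uv gdist_neq // uv /=.
apply/andP/eqP => [[/existsPn nu /existsPn nv]|Nuv].
  apply/setP => w; rewrite /closed_nbhd !inE.
  case: (eqVneq w u) => [->|neq_wu]; first by rewrite symX uv orbT.
  case: (eqVneq w v) => [->|neq_wv] //=.
  by apply/idP/idP => [uw|vw]; [move: (nu w) | move: (nv w)];
    rewrite gdist_eq2 ?uw ?vw ?neq_wv ?neq_wu /= negbK symX.
(* a neighbour at distance 2 from the other end would separate the two closed neighbourhoods *)
split; apply/existsPn => x; apply/negP => /andP [adj];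
  rewrite gdist_eq2 => /andP [neq nadj].
  have : x \in closed_nbhd X u by rewrite !inE adj orbT.
  by rewrite Nuv !inE (negbTE neq) symX (negbTE nadj).
have : x \in closed_nbhd X v by rewrite !inE adj orbT.
by rewrite -Nuv !inE (negbTE neq) symX (negbTE nadj).
Qed.

Lemma strong_resolving_graph_diam2 u v :
  strong_resolving_graph X u v = twin_edge X u v || (u != v) && ~~ X u v.
Proof.
rewrite /strong_resolving_graph /twin_edge.
case: (boolP (X u v)) => uv /=; first by rewrite mmd_adj // andbF orbF.
by rewrite mmd_nonadj // andbT.
Qed.

End DistanceFacts.

Section ModularProduct.
Variables (T1 T2 : finType) (G : rel T1) (H : rel T2).
Hypotheses (simpleG : simple_graph G) (simpleH : simple_graph H).

Lemma modular_prod_sym : symmetric (modular_prod G H).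
Proof.
case: simpleG simpleH => symG _ [symH _] p q.
by rewrite /modular_prod eq_sym [q.1 == _]eq_sym [q.2 == _]eq_sym symG symH.
Qed.

Lemma modular_prod_irr : irreflexive (modular_prod G H).
Proof. by move=> p; rewrite /modular_prod eqxx. Qed.

Lemma modular_prod_compl p q :
  compl_graph (modular_prod G H) p q =
  [|| cart_prod (compl_graph G) (compl_graph H) p q,
      direct_prod G (compl_graph H) p q
    | direct_prod (compl_graph G) H p q].
Proof.
case: simpleG simpleH => _ irrG [_ irrH]; case: p q => [a b] [c d].
rewrite /compl_graph /modular_prod /cart_prod /direct_prod /= xpair_eqE.
case: (eqVneq a c) => [<-|neq_ac]; case: (eqVneq b d) => [<-|neq_bd] //=;
  rewrite ?irrG ?irrH ?andbF //=;
  by case: (G _ _); case: (H _ _).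
Qed.

End ModularProduct.

Theorem mainTheorem7 (T1 T2 : finType) (G : rel T1) (H : rel T2)
  (hG : simple_graph G) (hH : simple_graph H)
  (hconn : gconnected (modular_prod G H))
  (hdiam : diam (modular_prod G H) = 2) :
  forall p q : T1 * T2,
    strong_resolving_graph (modular_prod G H) p q =
    [|| twin_edge (modular_prod G H) p q,
        cart_prod (compl_graph G) (compl_graph H) p q,
        direct_prod G (compl_graph H) p q
      | direct_prod (compl_graph G) H p q].
Proof.
move=> p q.
have diam_le2 : diam (modular_prod G H) <= 2 by rewrite hdiam.
rewrite strong_resolving_graph_diam2 //.
- by rewrite -modular_prod_compl.
- exact: modular_prod_sym.
- exact: modular_prod_irr.
Qed.
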